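(* Let $(S,\mathcal{A},\mu)$ be a complete, $\sigma$-finite measure space, $E$ a Köthe function space over $(S,\mathcal{A},\mu)$, and $X$ a locally almost square real Banach space such that the simple functions are dense in $E(X)$. Then $E(X)$ is locally almost square. In particular, if $p\in[1,\infty)$ and $X$ is locally almost square, then so is $L^p(\mu,X)$. Moreover, $L^\infty(\mu,X)$ is almost square (resp. locally almost square) whenever $X$ is almost square (resp. locally almost square).
   Context: A real Banach space $X$ is almost square (ASQ) if for all $n\in\mathbb{N}$ and $x_1,\dots,x_n\in S_X$ there is a sequence $(y_k)$ in $B_X$ with $\|y_k\|\to1$ and $\|x_i+y_k\|\to1$ for all $i=1,\dots,n$. $X$ is locally almost square (LASQ) if for every $x\in S_X$ there is a sequence $(y_k)$ in $B_X$ with $\|y_k\|\to1$ and $\|x\pm y_k\|\to1$. ($S_X$ unit sphere, $B_X$ closed unit ball.) Köthe function space over $(S,\mathcal{A},\mu)$: a Banach space $(E,\|\cdot\|_E)$ of real-valued measurable functions on $S$ (modulo a.e. equality) such that $\chi_A\in E$ whenever $\mu(A)<\infty$; every $f\in E$ is integrable over every set of finite measure; and if $g$ is measurable, $f\in E$ and $|g|\le|f|$ a.e., then $g\in E$ and $\|g\|_E\le\|f\|_E$. A function $f:S\to X$ is simple if it is constant on each of finitely many disjoint measurable sets of finite measure and zero outside their union; Bochner-measurable if it is an a.e. limit of simple functions. $E(X)$ is the space of Bochner-measurable $f:S\to X$ (modulo a.e.) with $\|f(\cdot)\|\in E$, normed by $\|f\|=\|\,\|f(\cdot)\|\,\|_E$.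 $L^p(\mu,X)$ denotes the Lebesgue–Bochner spaces. *)

From HB Require Import structures.
From mathcomp Require Import all_boot all_order all_algebra.
From mathcomp Require Import all_classical all_reals all_analysis.
Set Implicit Arguments. Unset Strict Implicit. Unset Printing Implicit Defensive.
Import Order.TTheory GRing.Theory Num.Theory.
Import numFieldNormedType.Exports.
Local Open Scope classical_set_scope.
Local Open Scope ring_scope.

(* Almost squareness for a (semi)normed space given as a carrier set [S]
   (closed under the vector operations) inside a zmodType [V], with norm [N]. *)
Definition ASQ_in {R : realType} {V : zmodType} (S : set V) (N : V -> R) : Prop :=
  forall (n : nat) (x : 'I_n.+1 -> V), (forall i, S (x i) /\ N (x i) = 1) ->
  exists y : nat -> V,
    (forall k, S (y k) /\ N (y k) <= 1) /\
    (N (y k) @[k --> \oo] --> (1 : R)) /\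
    (forall i, N (x i + y k) @[k --> \oo] --> (1 : R)).

Definition LASQ_in {R : realType} {V : zmodType} (S : set V) (N : V -> R) : Prop :=
  forall x : V, S x -> N x = 1 ->
  exists y : nat -> V,
    (forall k, S (y k) /\ N (y k) <= 1) /\
    (N (y k) @[k --> \oo] --> (1 : R)) /\
    (N (x + y k) @[k --> \oo] --> (1 : R)) /\
    (N (x - y k) @[k --> \oo] --> (1 : R)).

Definition ASQ {R : realType} (X : completeNormedModType R) : Prop :=
  ASQ_in [set: X] (fun x : X => `|x|).
Definition LASQ {R : realType} (X : completeNormedModType R) : Prop :=
  LASQ_in [set: X] (fun x : X => `|x|).

Section BochnerDefs.
Context {d : measure_display} {T : measurableType d} {R : realType}.
Variable mu : {measure set T -> \bar R}.
Variable X : completeNormedModType R.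

Definition simple_fun (f : T -> X) : Prop :=
  exists (n : nat) (A : 'I_n -> set T) (x : 'I_n -> X),
    (forall i, measurable (A i) /\ (mu (A i) < +oo)%E) /\
    (forall i j, i != j -> A i `&` A j = set0) /\
    f = (fun t => \sum_(i < n) ((\1_(A i) t : R) *: x i)).

Definition bochner_measurable (f : T -> X) : Prop :=
  exists s : nat -> T -> X, (forall n, simple_fun (s n)) /\
    {ae mu, forall t, s n t @[n --> \oo] --> f t}.

Definition EX (inE : set (T -> R)) : set (T -> X) :=
  fun f => bochner_measurable f /\ inE (fun t => `|f t|).
Definition EX_norm (nE : (T -> R) -> R) (f : T -> X) : R := nE (fun t => `|f t|).

Definition simple_dense_in_EX (inE : set (T -> R)) (nE : (T -> R) -> R) : Prop :=
  forall f, EX inE f -> forall e : R, 0 < e ->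
    exists s, simple_fun s /\ EX_norm nE (fun t => f t - s t) < e.

Definition Lp_set (p : \bar R) : set (T -> X) :=
  fun f => bochner_measurable f /\
    (Lnorm mu p (fun t => (`|f t|)%:E) < +oo)%E.
Definition Lp_norm (p : \bar R) (f : T -> X) : R :=
  fine (Lnorm mu p (fun t => (`|f t|)%:E)).
End BochnerDefs.

(* Köthe function space over (T, mu): a Banach space (E, nE) of measurable
   real functions (identified modulo a.e. equality: we work with
   representatives, nE vanishing exactly on a.e.-null functions). *)
Definition kothe_space {d : measure_display} {T : measurableType d} {R : realType}
  (mu : {measure set T -> \bar R}) (inE : set (T -> R)) (nE : (T -> R) -> R) : Prop :=
  [/\
      (forall f, inE f -> measurable_fun setT f),
      inE (fun=> 0) /\ (forall f g, inE f -> inE g -> inE (f \+ g)) /\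
      (forall (a : R) f, inE f -> inE (fun t => a * f t)),
      (forall f g, inE f -> inE g -> nE (f \+ g) <= nE f + nE g) /\
      (forall (a : R) f, inE f -> nE (fun t => a * f t) = `|a| * nE f) /\
      (forall f, inE f -> (nE f = 0 <-> {ae mu, forall t, f t = 0})),
      (forall u : nat -> T -> R, (forall n, inE (u n)) ->
        (forall e : R, 0 < e -> exists N : nat, forall m n, (N <= m)%N -> (N <= n)%N ->
            nE (fun t => u m t - u n t) < e) ->
        exists f, inE f /\ nE (fun t => u n t - f t) @[n --> \oo] --> (0 : R))
    & [/\
      (forall A, measurable A -> (mu A < +oo)%E -> inE (\1_A : T -> R)),
      (forall f A, inE f -> measurable A -> (mu A < +oo)%E ->
          mu.-integrable A (fun t => (f t)%:E))
    &
      (forall f (g : T -> R), measurable_fun setT g -> inE f ->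
          {ae mu, forall t, `|g t| <= `|f t|} -> inE g /\ nE g <= nE f)]].

Arguments simple_fun {d T R} mu X f.
Arguments bochner_measurable {d T R} mu X f.
Arguments EX {d T R} mu X inE _.
Arguments EX_norm {d T R} X nE f.
Arguments simple_dense_in_EX {d T R} mu X inE nE.
Arguments Lp_set {d T R} mu X p _.
Arguments Lp_norm {d T R} mu X p f.

(* For [E(X)], approximate [x] by a simple function [s = \sum_i 1_(A_i) v_i] and choose,
   for each value, a witness [z_i] of local almost squareness at [v_i / |v_i|]; then
   [y = \sum_i 1_(A_i) (|v_i| / (1 + e)) z_i] satisfies [|y| ~ |s| ~ |x|] and
   [|x +- y| ~ |s|] pointwise.  Monotonicity, subadditivity and homogeneity of the Köthe
   norm turn these pointwise estimates into norm estimates, and the factor [1 / (1 + e)]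
   keeps [||y|| <= 1].  [L^p] is the Köthe space case, density of simple functions coming
   from dominated convergence.  For [L^oo] one localizes instead: on a set [A] of positive
   finite measure each [x_i] stays [e]-close to a constant [v_i], and [y = 1_A z] for a
   common witness [z] of the directions of the [v_i]; then [||x_i + y||] is controlled by
   [|v_i + z|] on [A] and by [||x_i|| = 1] off [A]. *)

From HB Require Import structures.
From mathcomp Require Import all_boot all_order all_algebra.
From mathcomp Require Import all_classical all_reals all_analysis.
From mathcomp Require Import lra measurable_realfun ess_sup_inf.
Set Implicit Arguments. Unset Strict Implicit. Unset Printing Implicit Defensive.
Import Order.TTheory GRing.Theory Num.Theory.
Import numFieldNormedType.Exports.
Local Open Scope classical_set_scope.
Local Open Scope ring_scope.

Lemma ler_normD_move {R : numDomainType} {V : normedZmodType R} (x s w : V) :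
  `|x + w| <= `|s + w| + `|x - s|.
Proof. by rewrite -{1}(subrK s x) -addrA addrC ler_normD. Qed.

Lemma ler_norm_move {R : numDomainType} {V : normedZmodType R} (x s : V) :
  `|x| <= `|s| + `|x - s|.
Proof. by have := ler_normD_move x s 0; rewrite !addr0. Qed.

Lemma exists_unit_dir {R : numFieldType} {X : normedModType R} (u v : X) :
  `|u| = 1 -> exists w : X, `|w| = 1 /\ v = `|v| *: w.
Proof.
move=> u1; have [->|v0] := eqVneq v 0; first by exists u; rewrite normr0 scale0r.
exists (`|v|^-1 *: v); split; first by rewrite normrZ ger0_norm ?invr_ge0 // mulVf ?normr_eq0.
by rewrite scalerA mulfV ?normr_eq0 // scale1r.
Qed.

Section AlmostSquareWitness.
Context {R : realFieldType} {X : normedModType R}.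

Definition lasq_witness (e : R) (u z : X) : Prop :=
  [/\ `|z| <= 1, 1 - e <= `|z|, `|u + z| <= 1 + e & `|u - z| <= 1 + e].

Lemma lasq_witnessNr e u z : lasq_witness e u z -> lasq_witness e u (- z).
Proof. by case=> *; split; rewrite ?normrN ?opprK. Qed.

Lemma lasq_witnessNl e u z : lasq_witness e u z -> lasq_witness e (- u) z.
Proof. by case=> *; split; rewrite // -normrN opprD !opprK // addrC. Qed.

Lemma lasq_witness_scaleD e eps t (u z : X) : `|u| = 1 -> lasq_witness e u z ->
  0 <= eps -> 0 <= t <= 1 + eps -> 1 - 3 * e - eps <= `|t *: u + z| <= 1 + e + eps.
Proof.
move=> nu [z1 z2 uz1 uz2] eps0 /andP[t0 t1].
have nuz : `|- u + z| <= 1 + e by rewrite -normrN opprD opprK.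
have z2E (a : X) : z *+ 2 = (a + z) + (- a + z) by rewrite mulr2n addrACA subrr add0r.
have lowuz : 1 - 3 * e <= `|u + z|.
  have := ler_normD (u + z) (- u + z); rewrite -z2E normrMn; lra.
have [tle1|tgt1] := lerP t 1.
  (* [t u +- z] is the convex combination [t (u +- z) + (1 - t) z] *)
  have conv (a : X) : `|a + z| <= 1 + e -> `|t *: a + z| <= t * (1 + e) + (1 - t).
    move=> az; have -> : t *: a + z = t *: (a + z) + (1 - t) *: z.
      by rewrite scalerDr scalerBl scale1r addrACA subrr addr0.
    rewrite (le_trans (ler_normD _ _)) // !normrZ (ger0_norm t0) ger0_norm ?subr_ge0 //.
    by rewrite lerD ?ler_wpM2l // ?subr_ge0 // -[leRHS]mulr1 ler_wpM2l ?subr_ge0.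
  have := conv _ uz1; have := conv _ nuz; rewrite scalerN.
  have := ler_normD (t *: u + z) (- (t *: u) + z); rewrite -z2E normrMn.
  move=> *; apply/andP; split; nra.
have tuz : t *: u + z = (u + z) + (t - 1) *: u.
  by rewrite scalerBl scale1r [RHS]addrC addrA addrNK.
have nt : `|(t - 1) *: u| = t - 1 by rewrite normrZ nu mulr1 gtr0_norm ?subr_gt0.
have := ler_normD (u + z) ((t - 1) *: u); rewrite -tuz nt.
have := ler_normB (t *: u + z) ((t - 1) *: u); rewrite tuz addrK nt.
move=> *; apply/andP; split; lra.
Qed.

(* The estimates satisfied by [y = (|v| / (1 + e)) z] when [z] witnesses local almost
   squareness at [v / |v|], and by [y = 0] when [v = 0]. *)
Definition rescaled_witness (e : R) (v y : X) : Prop :=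
  [/\ (1 - e) / (1 + e) * `|v| <= `|y| <= (1 + e)^-1 * `|v|,
      (1 - 4 * e) / (1 + e) * `|v| <= `|v + y| <= (1 + 2 * e) / (1 + e) * `|v| &
      (1 - 4 * e) / (1 + e) * `|v| <= `|v - y| <= (1 + 2 * e) / (1 + e) * `|v|].

Lemma rescaled_witness0 e : rescaled_witness e 0 0.
Proof. by split; rewrite ?subr0 ?addr0 !normr0 ?mul0r ?mulr0 lexx. Qed.

Lemma rescaled_witness_of_lasq e (v z : X) : 0 <= e -> v != 0 ->
  lasq_witness e (`|v|^-1 *: v) z -> rescaled_witness e v ((`|v| / (1 + e)) *: z).
Proof.
move=> e0 v0 wz; set u := `|v|^-1 *: v.
have nv : 0 < `|v| by rewrite normr_gt0.
have nu : `|u| = 1 by rewrite normrZ ger0_norm ?invr_ge0 // mulVf ?gt_eqF.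
have e1 : 0 < 1 + e by lra.
pose c : R := `|v| / (1 + e).
have c0 : 0 < c by rewrite divr_gt0.
have vE : v = c *: ((1 + e) *: u).
  by rewrite scalerA /c mulfVK ?gt_eqF // /u scalerA mulfV ?gt_eqF // scale1r.
have [z1 z2 _ _] := wz.
have t1 : 0 <= 1 + e <= 1 + e by rewrite lexx ltW.
have /andP[p1 p2] := lasq_witness_scaleD nu wz e0 t1.
have nNu : `|- u| = 1 by rewrite normrN.
have /andP[m1 m2] := lasq_witness_scaleD nNu (lasq_witnessNl wz) e0 t1.
have cE k : k / (1 + e) * `|v| = c * k by rewrite /c [LHS]mulrC mulrA mulrAC.
have cE1 : (1 + e)^-1 * `|v| = c by rewrite mulrC.
rewrite /rescaled_witness !cE cE1 -/c; clearbody c.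
rewrite vE -scalerDr -scalerBr !normrZ (gtr0_norm c0).
have -> : (1 + e) *: u - z = - ((1 + e) *: - u + z) by rewrite scalerN opprD opprK.
rewrite normrN; split; apply/andP; split; rewrite ?ler_pM2l //; try lra.
by rewrite -[leRHS]mulr1 ler_pM2l.
Qed.

End AlmostSquareWitness.

Section WitnessExistence.
Context {R : realType} {X : completeNormedModType R}.

Lemma cvg_near_itv (u : nat -> R) (l e : R) : u @ \oo --> l -> 0 < e ->
  \forall k \near \oo, l - e <= u k <= l + e.
Proof.
move=> ul e0; near=> k; rewrite -ler_distlC.
by near: k; apply: cvgr_dist_le.
Unshelve. all: by end_near. Qed.

Lemma LASQ_witness (u : X) e : LASQ X -> `|u| = 1 -> 0 < e ->
  exists z, lasq_witness e u z.
Proof.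
move=> lasq nu e0; have [y [hy [c1 [c2 c3]]]] := lasq u I nu.
have [k [/andP[h1 _] [/andP[_ h2] /andP[_ h3]]]] := filter_ex
  (filterS3 _ (fun k a b c => conj a (conj b c))
    (cvg_near_itv c1 e0) (cvg_near_itv c2 e0) (cvg_near_itv c3 e0)).
by exists (y k); split => //; case: (hy k).
Qed.

Lemma ASQ_witness n (w : 'I_n.+1 -> X) e : ASQ X -> (forall i, `|w i| = 1) -> 0 < e ->
  exists z, forall i, lasq_witness e (w i) z.
Proof.
move=> asq hw e0.
(* the family [w] followed by [- w]: being close to both makes [z] a two-sided witness *)
pose F (j : 'I_(n + n.+1).+1) : X :=
  match fintype.split (j : 'I_(n.+1 + n.+1)) with inl i => w i | inr i => - w i end.
have hF j : [set: X] (F j) /\ `|F j| = 1.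
  by split => //; rewrite /F; case: fintype.split => i; rewrite ?normrN hw.
have [y [hy [c1 c2]]] := asq _ F hF.
have near_all : \forall k \near \oo, forall j, `|F j + y k| <= 1 + e.
  apply: filter_forall => j.
  by apply: filterS (cvg_near_itv (c2 j) e0) => k /andP[].
have [k [/andP[h1 _] h2]] := filter_ex (filterS2 _ (fun k a b => conj a b)
  (cvg_near_itv c1 e0) near_all).
exists (y k) => i; split => //; first by case: (hy k).
  by have := h2 (fintype.unsplit (inl i)); rewrite /F unsplitK.
have := h2 (@fintype.unsplit n.+1 n.+1 (inr i)); rewrite /F unsplitK.
by rewrite -normrN opprD opprK addrC.
Qed.

Lemma LASQ_rescaled_witness (v : X) e : LASQ X -> 0 < e ->
  exists y, rescaled_witness e v y.
Proof.
move=> lasq e0; have [->|v0] := eqVneq v 0; first by exists 0; exact: rescaled_witness0.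
have nu : `|(`|v|^-1 *: v)| = 1.
  by rewrite normrZ ger0_norm ?invr_ge0 // mulVf // normr_eq0.
have [z wz] := LASQ_witness lasq nu e0.
by exists ((`|v| / (1 + e)) *: z); exact: rescaled_witness_of_lasq (ltW e0) v0 wz.
Qed.

End WitnessExistence.

Section ApproximateAlmostSquare.
Context {R : realType} {V : zmodType} (S : set V) (N : V -> R).

Lemma invS_itv k : 0 < (k.+1%:R^-1 : R) <= 1.
Proof. by rewrite invr_gt0 ltr0n /= invf_le1 ?ler1n. Qed.

Lemma cvg_dist_le_invS (u : nat -> R) (l : R) :
  (forall k, `|u k - l| <= k.+1%:R^-1) -> u @ \oo --> l.
Proof.
move=> H; apply/cvgrPdist_le => e e0; near=> k.
rewrite distrC (le_trans (H k)) // ltW //.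
by near: k; exact: (near_infty_natSinv_lt (PosNum e0)).
Unshelve. all: by end_near. Qed.

Lemma LASQ_in_approx :
  (forall x, S x -> N x = 1 -> forall e, 0 < e <= 1 -> exists y,
     [/\ S y, N y <= 1, 1 - e <= N y, `|N (x + y) - 1| <= e & `|N (x - y) - 1| <= e]) ->
  LASQ_in S N.
Proof.
move=> approx x Sx Nx.
have [y hy] := choice (fun k => approx x Sx Nx _ (invS_itv k)).
exists y; split; first by move=> k; have [] := hy k.
split; [|split]; apply: cvg_dist_le_invS => k; have [_ h1 h2 h3 h4] := hy k => //.
by rewrite distrC ler_distlC h2 (le_trans h1) // lerDl; have /andP[/ltW] := invS_itv k.
Qed.

Lemma ASQ_in_approx :
  (forall n (x : 'I_n.+1 -> V), (forall i, S (x i) /\ N (x i) = 1) ->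
   forall e, 0 < e <= 1 -> exists y,
     [/\ S y, N y <= 1, 1 - e <= N y & forall i, `|N (x i + y) - 1| <= e]) ->
  ASQ_in S N.
Proof.
move=> approx n x hx.
have [y hy] := choice (fun k => approx n x hx _ (invS_itv k)).
exists y; split; first by move=> k; have [] := hy k.
split=> [|i]; apply: cvg_dist_le_invS => k; have [_ h1 h2 h3] := hy k => //.
by rewrite distrC ler_distlC h2 (le_trans h1) // lerDl; have /andP[/ltW] := invS_itv k.
Qed.

End ApproximateAlmostSquare.

(** * Simple and Bochner measurable functions *)

Lemma measurable_sublevel {d : measure_display} {T : measurableType d} {R : realType}
    (h : T -> R) (c : R) :
  measurable_fun setT h -> measurable [set t | h t <= c].
Proof.
move=> mh; have := mh measurableT _ (measurable_itv `]-oo, c]); rewrite setTI.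
by congr measurable; apply/seteqP; split => t /=; rewrite in_itv.
Qed.

Section SimpleFunctions.
Context {d : measure_display} {T : measurableType d} {R : realType}.
Variable mu : {measure set T -> \bar R}.

Lemma indic_sum_in (V : lmodType R) n (A : 'I_n -> set T) (v : 'I_n -> V) t i :
  (forall i j, i != j -> A i `&` A j = set0) -> A i t ->
  \sum_(j < n) (\1_(A j) t : R) *: v j = v i.
Proof.
move=> dis Ait; rewrite (bigD1 i) //= big1 ?addr0; first by rewrite indicE mem_set // scale1r.
move=> j ji; rewrite indicE memNset ?scale0r // => Ajt.
by have := dis _ _ ji; rewrite -subset0 => /(_ t); apply.
Qed.

Lemma indic_sum_out (V : lmodType R) n (A : 'I_n -> set T) (v : 'I_n -> V) t :
  (forall i, ~ A i t) -> \sum_(j < n) (\1_(A j) t : R) *: v j = 0.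
Proof. by move=> nA; rewrite big1 // => j _; rewrite indicE memNset ?scale0r. Qed.

Lemma indic_sum_pair_ind (V W : lmodType R) (P : V -> W -> Prop) n (A : 'I_n -> set T)
    (v : 'I_n -> V) (w : 'I_n -> W) t :
  (forall i j, i != j -> A i `&` A j = set0) -> P 0 0 -> (forall i, P (v i) (w i)) ->
  P (\sum_(i < n) (\1_(A i) t : R) *: v i) (\sum_(i < n) (\1_(A i) t : R) *: w i).
Proof.
move=> dis P00 Pvw; have [[i Ait]|nA] := pselect (exists i, A i t).
  by rewrite !(indic_sum_in _ dis Ait).
by rewrite !indic_sum_out // => i Ait; apply: nA; exists i.
Qed.

Variable X : completeNormedModType R.

Lemma simple_funN (s : T -> X) : simple_fun mu X s -> simple_fun mu X (fun t => - s t).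
Proof.
move=> [n [A [v [hA [dis ->]]]]]; exists n, A, (fun i => - v i); do 2!split => //.
by apply/funext => t; rewrite -sumrN; apply: eq_bigr => i _; rewrite scalerN.
Qed.

Lemma simple_fun_indicZ (A : set T) (z : X) : measurable A -> (mu A < +oo)%E ->
  simple_fun mu X (fun t => (\1_A t : R) *: z).
Proof.
move=> mA Afin; exists 1%N, (fun=> A), (fun=> z); do 2!split => //.
  by move=> i j; rewrite !ord1 eqxx.
by apply/funext => t; rewrite big_ord1.
Qed.

Lemma simple_fun_restrict (B : set T) (s : T -> X) : measurable B -> simple_fun mu X s ->
  simple_fun mu X (fun t => (\1_B t : R) *: s t).
Proof.
move=> mB [n [A [v [hA [dis ->]]]]]; exists n, (fun i => A i `&` B), v; split.
  move=> i; have [mA fA] := hA i; split; first exact: measurableI.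
  by apply: le_lt_trans fA; apply: le_measure; rewrite ?inE //; exact: measurableI.
split; first by move=> i j ij; rewrite setIACA (dis i j ij) set0I.
apply/funext => t; rewrite scaler_sumr; apply: eq_bigr => i _.
by rewrite scalerA indicI /= mulrC.
Qed.

Lemma simple_fun_bochner (s : T -> X) : simple_fun mu X s -> bochner_measurable mu X s.
Proof. by move=> hs; exists (fun=> s); split => //; apply: aeW => t; exact: cvg_cst. Qed.

(* Measurability of [|F|] alone is not stable under adding simple functions; that of all
   the translates [|c + F|] is. *)
Definition norm_measurable (F : T -> X) : Prop :=
  forall c : X, measurable_fun setT (fun t => `|c + F t|).

Lemma norm_measurable_norm F : norm_measurable F -> measurable_fun setT (fun t => `|F t|).
Proof. by move=> /(_ 0); under eq_fun do rewrite add0r. Qed.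

Lemma norm_measurable_add_indic F (A : set T) (w : X) :
  norm_measurable F -> measurable A -> norm_measurable (fun t => F t + (\1_A t : R) *: w).
Proof.
move=> mF mA c.
have -> : (fun t => `|c + (F t + (\1_A t : R) *: w)|) =
    (fun t => \1_A t * `|(c + w) + F t| + (1 - \1_A t) * `|c + F t|).
  apply/funext => t; rewrite indicE; case: (t \in A) => /=.
    by rewrite scale1r mul1r subrr mul0r addr0 addrA addrAC.
  by rewrite scale0r addr0 mul0r add0r subr0 mul1r.
apply: measurable_funD; apply: measurable_funM; try exact: mF.
- exact: measurable_indic.
- by apply: measurable_funB; [exact: measurable_cst | exact: measurable_indic].
Qed.

Lemma norm_measurable_add_indic_sum F n (A : 'I_n -> set T) (v : 'I_n -> X) :
  norm_measurable F -> (forall i, measurable (A i)) ->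
  norm_measurable (fun t => F t + \sum_(i < n) (\1_(A i) t : R) *: v i).
Proof.
elim: n A v => [|n IH] A v mF mA.
  by under eq_fun do rewrite big_ord0 addr0.
under eq_fun do rewrite big_ord_recr /= addrA.
by apply: norm_measurable_add_indic => //; apply: IH.
Qed.

Lemma norm_measurable_add_simple F s : norm_measurable F -> simple_fun mu X s ->
  norm_measurable (fun t => F t + s t).
Proof.
move=> mF [n [A [v [hA [_ ->]]]]].
by apply: norm_measurable_add_indic_sum => // i; case: (hA i).
Qed.

Lemma simple_norm_measurable s : simple_fun mu X s -> norm_measurable s.
Proof.
move=> hs; have := @norm_measurable_add_simple (fun=> 0) s _ hs.
by under [fun t => _ + _]eq_fun do rewrite add0r; apply=> c; exact: measurable_cst.
Qed.

Hypothesis mu_complete : measure_is_complete mu.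

Lemma ae_cvg_measurable (h : nat -> T -> R) (g : T -> R) :
  (forall n, measurable_fun setT (h n)) ->
  (\forall t \ae mu, h ^~ t @ \oo --> g t) -> measurable_fun setT g.
Proof.
move=> mh hg; apply/measurable_EFinP.
apply: (@ae_measurable_fun _ _ _ mu mu_complete setT
  (fun t => limn_esup (fun n => (h n t)%:E))).
  apply: filterS hg => t ht _ /=; rewrite limn_esup_lim; apply/cvg_lim => //.
  by apply: cvg_esups; apply: cvg_EFin; [exact: nearW | exact: ht].
by apply: measurable_fun_limn_esup => n; exact/measurable_EFinP.
Qed.

Lemma bochner_norm_measurable f : bochner_measurable mu X f -> norm_measurable f.
Proof.
move=> [s [hs ae]] c; apply: (@ae_cvg_measurable (fun n t => `|c + s n t|)).
  by move=> n; exact: simple_norm_measurable.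
apply: filterS ae => t ht; apply: cvg_norm; apply: cvgD; [exact: cvg_cst | exact: ht].
Qed.

Lemma measurable_norm_bochner f : bochner_measurable mu X f ->
  measurable_fun setT (fun t => `|f t|).
Proof. by move/bochner_norm_measurable/norm_measurable_norm. Qed.

Lemma measurable_norm_bochnerD f s : bochner_measurable mu X f -> simple_fun mu X s ->
  measurable_fun setT (fun t => `|f t + s t|).
Proof.
by move=> bf hs; apply/norm_measurable_norm/norm_measurable_add_simple => //;
  exact: bochner_norm_measurable.
Qed.

Lemma bochner_dominated_simple_approx (x : T -> X) : bochner_measurable mu X x ->
  exists s : nat -> T -> X, [/\ forall n, simple_fun mu X (s n),
    forall n t, `|s n t| <= 2 * `|x t| & \forall t \ae mu, s ^~ t @ \oo --> x t].
Proof.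
move=> bx; have [sq [hsq ae]] := bx.
pose B n := [set t | `|sq n t| - 2 * `|x t| <= 0].
have mB n : measurable (B n).
  apply/measurable_sublevel/measurable_funB.
    exact/norm_measurable_norm/simple_norm_measurable.
  exact/measurable_funM/measurable_norm_bochner.
pose s n t := (\1_(B n) t : R) *: sq n t.
have sx n t : `|s n t| <= 2 * `|x t|.
  rewrite normrZ indicE; case: (boolP (t \in B n)) => [/set_mem|_] /=.
    by rewrite normr1 mul1r /B /=; lra.
  by rewrite normr0 mul0r mulr_ge0.
exists s; split => //; first by move=> n; exact: simple_fun_restrict.
apply: filterS ae => t ht; have [xt0|xt0] := eqVneq (x t) 0.
  have s0 n : s n t = 0.
    by apply/eqP; rewrite -normr_le0; have := sx n t; rewrite xt0 normr0 mulr0.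
  by under eq_fun do rewrite s0; rewrite xt0; exact: cvg_cst.
have xt_gt0 : 0 < `|x t| by rewrite normr_gt0.
apply: (cvg_trans (near_eq_cvg _) ht); near=> n.
have h : `|x t - sq n t| <= `|x t| by near: n; apply: cvgr_dist_le.
rewrite /s indicE mem_set ?scale1r // /B /=.
by have := ler_normB (x t) (x t - sq n t); rewrite subKr; lra.
Unshelve. all: by end_near. Qed.

End SimpleFunctions.

(** * Köthe function spaces *)

Lemma scaled_itv_bounds {R : realFieldType} (e g lo hi : R) : 0 <= e -> 0 <= lo -> 0 <= hi ->
  1 - e <= g <= 1 + e -> lo * (1 - 2 * e) <= lo / (1 + e) * g /\ hi / (1 + e) * g <= hi.
Proof.
move=> e0 lo0 hi0 /andP[g1 g2]; have e1 : 0 < 1 + e by lra.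
rewrite [lo / _ * _]mulrAC [hi / _ * _]mulrAC ler_pdivlMr // ler_pdivrMr //.
by split; nra.
Qed.

Section LatticeNormedFunctions.
Context {d : measure_display} {T : measurableType d} {R : realType}.
Variable mu : {measure set T -> \bar R}.
Hypothesis mu_complete : measure_is_complete mu.
Variable X : completeNormedModType R.

(* [G] plays the nonnegative cone of a Köthe space (or of [L^p]) with norm [N]; only
   monotonicity, subadditivity, positive homogeneity and the indicators are used. *)
Variables (G : set (T -> R)) (N : (T -> R) -> R).
Hypothesis G_measurable : forall f, G f -> measurable_fun setT f.
Hypothesis G_le : forall f g : T -> R, G g -> measurable_fun setT f ->
  (forall t, 0 <= f t <= g t) -> G f /\ N f <= N g.
Hypothesis G_add : forall f g : T -> R, G f -> G g -> G (f \+ g) /\ N (f \+ g) <= N f + N g.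
Hypothesis G_scale : forall (c : R) (f : T -> R), 0 <= c -> G f ->
  G (fun t => c * f t) /\ N (fun t => c * f t) = c * N f.
Hypothesis G_indic : forall A, measurable A -> (mu A < +oo)%E -> G (\1_A).

Lemma G0 : G (fun=> 0) /\ N (fun=> 0) = 0.
Proof.
have [] := G_scale (lexx 0) (G_indic measurable0 ltac:(by rewrite measure0)).
by rewrite mul0r; under eq_fun do rewrite mul0r.
Qed.

Lemma G_indic_sum n (A : 'I_n -> set T) (c : 'I_n -> R) :
  (forall i, measurable (A i) /\ (mu (A i) < +oo)%E) -> (forall i, 0 <= c i) ->
  G (fun t => \sum_(i < n) c i * \1_(A i) t).
Proof.
elim: n A c => [|n IH] A c hA c0; first by under eq_fun do rewrite big_ord0; exact: G0.1.
under eq_fun do rewrite big_ord_recr /=.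
apply: (G_add (IH _ _ (fun i => hA _) (fun i => c0 _)) _).1.
by have [mA fA] := hA ord_max; apply: (G_scale _ _).1 => //; exact: G_indic.
Qed.

Lemma G_norm_simple (s : T -> X) : simple_fun mu X s -> G (fun t => `|s t|).
Proof.
move=> hs; have ms := norm_measurable_norm (simple_norm_measurable hs).
move: hs => [n [A [v [hA [_ sE]]]]].
apply: (G_le (G_indic_sum hA (fun i => normr_ge0 (v i))) ms _).1 => t.
rewrite normr_ge0 sE (le_trans (ler_norm_sum _ _ _)) //=; apply: ler_sum => i _.
by rewrite normrZ mulrC ger0_norm // indicE.
Qed.

Lemma N_sandwich (f g h : T -> R) (a b : R) : G g -> G h -> measurable_fun setT f ->
  0 <= a -> 0 <= b -> (forall t, 0 <= g t) -> (forall t, 0 <= f t) ->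
  (forall t, a * g t <= f t + h t) -> (forall t, f t <= b * g t + h t) ->
  G f /\ a * N g - N h <= N f <= b * N g + N h.
Proof.
move=> Gg Gh mf a0 b0 g0 f0 lo up.
have [Gbg Nbg] := G_scale b0 Gg; have [Gbgh Nbgh] := G_add Gbg Gh.
have [Gf Nf] := G_le Gbgh mf (fun t => introT andP (conj (f0 t) (up t))).
have [Gag Nag] := G_scale a0 Gg; have [Gfh Nfh] := G_add Gf Gh.
have [_ Nlo] := G_le Gfh (G_measurable Gag)
  (fun t => introT andP (conj (mulr_ge0 a0 (g0 t)) (lo t))).
by split=> //; rewrite Nag in Nlo; rewrite Nbg in Nbgh; apply/andP; split; lra.
Qed.

Lemma simple_rescaled_witness (s : T -> X) e : LASQ X -> 0 < e -> simple_fun mu X s ->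
  exists y, simple_fun mu X y /\ forall t, rescaled_witness e (s t) (y t).
Proof.
move=> lasq e0 [n [A [v [hA [dis ->]]]]].
have [w hw] := choice (fun i => LASQ_rescaled_witness (v i) lasq e0).
exists (fun t => \sum_(i < n) (\1_(A i) t : R) *: w i); split; first by exists n, A, w.
by move=> t; apply: indic_sum_pair_ind => //; exact: rescaled_witness0.
Qed.

Lemma N_simple_approx (x s : T -> X) e :
  bochner_measurable mu X x -> G (fun t => `|x t|) -> N (fun t => `|x t|) = 1 ->
  simple_fun mu X s -> N (fun t => `|x t - s t|) < e ->
  G (fun t => `|x t - s t|) /\ 1 - e <= N (fun t => `|s t|) <= 1 + e.
Proof.
move=> bx Gx Nx hs Nxs; have Gs := G_norm_simple hs.
have Gxs : G (fun t => `|x t - s t|).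
  apply: (G_le (G_add Gx Gs).1 (measurable_norm_bochnerD mu_complete bx (simple_funN hs)) _).1.
  by move=> t; rewrite normr_ge0 ler_normB.
have x_le t : 1 * `|x t| <= `|s t| + `|x t - s t| by rewrite mul1r ler_norm_move.
have s_le t : `|s t| <= 1 * `|x t| + `|x t - s t| by rewrite mul1r distrC ler_norm_move.
have [_ /andP[]] := N_sandwich Gx Gxs (G_measurable Gs) ler01 ler01
  (fun t => normr_ge0 _) (fun t => normr_ge0 _) x_le s_le.
by rewrite !mul1r Nx => lo hi; split => //; apply/andP; split; lra.
Qed.

Lemma N_approx_add (x s w : T -> X) e :
  bochner_measurable mu X x -> simple_fun mu X w ->
  G (fun t => `|s t|) -> G (fun t => `|x t - s t|) -> N (fun t => `|x t - s t|) < e ->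
  1 - e <= N (fun t => `|s t|) <= 1 + e -> 0 < e -> 8 * e <= 1 ->
  (forall t, (1 - 4 * e) / (1 + e) * `|s t| <= `|s t + w t| <=
             (1 + 2 * e) / (1 + e) * `|s t|) ->
  `|N (fun t => `|x t + w t|) - 1| <= 7 * e.
Proof.
move=> bx hw Gs Gxs Nxs Ns e0 e8 sw.
have e1 : 0 <= 1 + e by lra.
have e4 : 0 <= 1 - 4 * e by lra.
have e2 : 0 <= 1 + 2 * e by lra.
have lo t : (1 - 4 * e) / (1 + e) * `|s t| <= `|x t + w t| + `|x t - s t|.
  by have /andP[/le_trans + _] := sw t; apply; rewrite distrC ler_normD_move.
have hi t : `|x t + w t| <= (1 + 2 * e) / (1 + e) * `|s t| + `|x t - s t|.
  have /andP[_ /lerD /(_ (lexx `|x t - s t|))] := sw t.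
  exact: le_trans (ler_normD_move _ (s t) _).
have [_ /andP[Nlo Nhi]] := N_sandwich Gs Gxs (measurable_norm_bochnerD mu_complete bx hw)
  (divr_ge0 e4 e1) (divr_ge0 e2 e1) (fun t => normr_ge0 _) (fun t => normr_ge0 _) lo hi.
have [lo_s hi_s] := scaled_itv_bounds (ltW e0) e4 e2 Ns.
by rewrite ler_distlC; apply/andP; split; nra.
Qed.

Lemma N_rescaled_witness (x s y : T -> X) e :
  bochner_measurable mu X x -> G (fun t => `|x t|) -> N (fun t => `|x t|) = 1 ->
  simple_fun mu X s -> N (fun t => `|x t - s t|) < e ->
  simple_fun mu X y -> (forall t, rescaled_witness e (s t) (y t)) -> 0 < e -> 8 * e <= 1 ->
  [/\ G (fun t => `|y t|), N (fun t => `|y t|) <= 1, 1 - 7 * e <= N (fun t => `|y t|),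
      `|N (fun t => `|x t + y t|) - 1| <= 7 * e & `|N (fun t => `|x t - y t|) - 1| <= 7 * e].
Proof.
move=> bx Gx Nx hs Nxs hy wy e0 e8.
have Gs := G_norm_simple hs.
have [Gxs Ns] := N_simple_approx bx Gx Nx hs Nxs.
have e1 : 0 < 1 + e by lra.
have e_1 : 0 <= 1 - e by lra.
have ie : 0 <= (1 + e)^-1 by rewrite invr_ge0 ltW.
have y_lo t : (1 - e) / (1 + e) * `|s t| <= `|y t| + 0.
  by rewrite addr0; have [/andP[]] := wy t.
have y_hi t : `|y t| <= (1 + e)^-1 * `|s t| + 0.
  by rewrite addr0; have [/andP[]] := wy t.
have [Gy /andP[]] := N_sandwich Gs G0.1 (norm_measurable_norm (simple_norm_measurable hy))
  (divr_ge0 e_1 (ltW e1)) ie (fun t => normr_ge0 _) (fun t => normr_ge0 _)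
  y_lo y_hi.
rewrite G0.2 subr0 addr0 => Ny_lo Ny_hi.
have [lo_y hi_y] := scaled_itv_bounds (hi := 1) (ltW e0) e_1 ler01 Ns.
rewrite mul1r in hi_y.
split=> //; [lra | nra | |].
- by apply: (N_approx_add bx hy Gs Gxs Nxs Ns e0 e8) => t; have [_ ] := wy t.
- apply: (N_approx_add bx (simple_funN hy) Gs Gxs Nxs Ns e0 e8) => t.
  by have [_ _] := wy t.
Qed.

Theorem LASQ_in_lattice_bochner : LASQ X ->
  (forall x, bochner_measurable mu X x -> G (fun t => `|x t|) -> forall e, 0 < e ->
     exists s, simple_fun mu X s /\ N (fun t => `|x t - s t|) < e) ->
  LASQ_in (fun f => bochner_measurable mu X f /\ G (fun t => `|f t|))
          (fun f => N (fun t => `|f t|)).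
Proof.
move=> lasq dense; apply: LASQ_in_approx => x [bx Gx] Nx e /andP[e0 e1].
have e8 : 0 < e / 8 by rewrite divr_gt0.
have [s [hs Nxs]] := dense x bx Gx _ e8.
have [y [hy wy]] := simple_rescaled_witness lasq e8 hs.
have [Gy Ny1 Ny Nxpy Nxmy] := N_rescaled_witness bx Gx Nx hs Nxs hy wy e8 ltac:(lra).
exists y; split=> /=; [by split; first exact: simple_fun_bochner | by [] | lra | |].
- by apply: le_trans Nxpy _; lra.
- by apply: le_trans Nxmy _; lra.
Qed.

End LatticeNormedFunctions.

Lemma kothe_EX_LASQ {d : measure_display} {T : measurableType d} {R : realType}
    (mu : {measure set T -> \bar R}) (X : completeNormedModType R)
    (inE : set (T -> R)) (nE : (T -> R) -> R) :
  measure_is_complete mu -> kothe_space mu inE nE -> LASQ X ->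
  simple_dense_in_EX mu X inE nE -> LASQ_in (EX mu X inE) (EX_norm X nE).
Proof.
move=> cmu [Km [_ [Kadd Ksc]] [Ktri [Khom _]] _ [Kind _ Kid]] lasq dense.
apply: (LASQ_in_lattice_bochner cmu Km _ _ _ Kind lasq).
- move=> f g Eg mf fg; apply: Kid => //; apply: aeW => t.
  by have /andP[f0 fg'] := fg t; rewrite !ger0_norm // (le_trans f0).
- by move=> f g Ef Eg; split; [exact: Kadd | exact: Ktri].
- by move=> c f c0 Ef; split; [exact: Ksc | rewrite Khom // ger0_norm].
- by move=> x bx Ex; exact: dense.
Qed.

(** * Lebesgue-Bochner spaces, finite exponent *)

Lemma powR_cvg0_nonneg {R : realType} (u : nat -> R) (r : R) : 0 < r ->
  (forall n, 0 <= u n) -> u @ \oo --> 0 -> (fun n => u n `^ r) @ \oo --> 0.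
Proof.
move=> r0 u0 cu; apply/cvgrPdist_le => e e0.
have er0 : 0 < e `^ r^-1 by rewrite powR_gt0.
near=> n.
have : `|0 - u n| <= e `^ r^-1 by near: n; apply: cvgr_dist_le.
rewrite !sub0r !normrN ger0_norm // ger0_norm ?powR_ge0 // => h.
have -> : e = (e `^ r^-1) `^ r by rewrite -powRrM mulVf ?gt_eqF // powRr1 // ltW.
by apply: ge0_ler_powR; rewrite ?nnegrE ?powR_ge0 ?u0 // ltW.
Unshelve. all: by end_near. Qed.

Section LpFinite.
Context {d : measure_display} {T : measurableType d} {R : realType}.
Variable mu : {measure set T -> \bar R}.
Variable p : R.
Hypothesis p1 : 1 <= p.

Let p0 : 0 < p. Proof. exact: lt_le_trans ltr01 p1. Qed.

Local Notation LN f := (Lnorm mu p%:E (EFin \o f)).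

Lemma Lnorm_powR_integral (f : T -> R) :
  LN f = ((\int[mu]_t (`|f t| `^ p)%:E) `^ p^-1)%E.
Proof. by rewrite unlock /Lnorm. Qed.

Lemma measurable_normr_powR (f : T -> R) : measurable_fun setT f ->
  measurable_fun setT (fun t => (`|f t| `^ p)%:E).
Proof.
move=> mf; apply/measurable_EFinP; apply: (measurableT_comp (measurable_powR p)).
exact: measurableT_comp.
Qed.

Lemma Lnorm_le (f g : T -> R) : measurable_fun setT f -> measurable_fun setT g ->
  (forall t, 0 <= f t <= g t) -> (LN f <= LN g)%E.
Proof.
move=> mf mg fg; rewrite !Lnorm_powR_integral; apply: gt0_ler_poweR.
- by rewrite invr_ge0 ltW.
- by rewrite in_itv /= leey andbT integral_ge0 // => t _; rewrite lee_fin powR_ge0.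
- by rewrite in_itv /= leey andbT integral_ge0 // => t _; rewrite lee_fin powR_ge0.
apply: ge0_le_integral; rewrite //; try exact: measurable_normr_powR.
move=> t _; rewrite lee_fin; have /andP[f0 fg'] := fg t.
by apply: ge0_ler_powR; rewrite ?nnegrE ?ger0_norm ?(ltW p0) // (le_trans f0).
Qed.

Lemma Lnorm_fin_num (f : T -> R) : (LN f < +oo)%E -> LN f \is a fin_num.
Proof. by move=> h; rewrite ge0_fin_numE // Lnorm_ge0. Qed.

Definition Lp_finite (f : T -> R) : Prop := measurable_fun setT f /\ (LN f < +oo)%E.
Definition Lp_fnorm (f : T -> R) : R := fine (LN f).

Lemma Lp_finite_le (f g : T -> R) : Lp_finite g -> measurable_fun setT f ->
  (forall t, 0 <= f t <= g t) -> Lp_finite f /\ Lp_fnorm f <= Lp_fnorm g.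
Proof.
move=> [mg fg] mf H; have le := Lnorm_le mf mg H.
have ff : (LN f < +oo)%E by exact: le_lt_trans le fg.
by split => //; apply: fine_le => //; exact: Lnorm_fin_num.
Qed.

Lemma Lp_finite_add (f g : T -> R) : Lp_finite f -> Lp_finite g ->
  Lp_finite (f \+ g) /\ Lp_fnorm (f \+ g) <= Lp_fnorm f + Lp_fnorm g.
Proof.
move=> [mf ff] [mg fg]; have le := minkowski_EFin mu mf mg p1.
have fs : (LN (f \+ g)%R < +oo)%E by apply: le_lt_trans le _; rewrite lte_add_pinfty.
split; first by split => //; exact: measurable_funD.
rewrite /Lp_fnorm -fineD ?Lnorm_fin_num //.
by apply: fine_le => //; rewrite ?fin_numD ?Lnorm_fin_num.
Qed.

Lemma Lp_finite_scale (c : R) (f : T -> R) : 0 <= c -> Lp_finite f ->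
  Lp_finite (fun t => c * f t) /\ Lp_fnorm (fun t => c * f t) = c * Lp_fnorm f.
Proof.
move=> c0 [mf ff].
have Pf : f \in Lfun mu p%:E by apply/andP; split; rewrite inE.
have := LnormZ (@Lfun_Sub _ _ _ mu p%:E ltac:(by rewrite lee_fin) f Pf) c.
rewrite ger0_norm // => E.
split; last by rewrite /Lp_fnorm E fineM // Lnorm_fin_num.
split; first exact: measurable_funM.
by rewrite E -(fineK (Lnorm_fin_num ff)) -EFinM ltry.
Qed.

Lemma Lp_finite_indic (A : set T) : measurable A -> (mu A < +oo)%E -> Lp_finite (\1_A).
Proof.
move=> mA Afin; split; first exact: measurable_indic.
rewrite Lnorm_powR_integral; apply: poweR_lty.
rewrite (eq_integral (fun t => (\1_A t)%:E)); first by rewrite integral_indic // setIT.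
move=> t _; rewrite indicE; case: (t \in A) => /=.
  by rewrite normr1 powR1.
by rewrite normr0 powR0 // gt_eqF.
Qed.

Lemma integral_normr_powR_lty (f : T -> R) : (LN f < +oo)%E ->
  (\int[mu]_t (`|f t| `^ p)%:E < +oo)%E.
Proof.
move=> ff; apply: (@lty_poweRy _ _ p^-1); first by rewrite invr_neq0 // gt_eqF.
by rewrite -Lnorm_powR_integral.
Qed.

Lemma Lp_fnormE (f : T -> R) : (LN f < +oo)%E ->
  Lp_fnorm f = fine (\int[mu]_t (`|f t| `^ p)%:E) `^ p^-1.
Proof.
move=> /integral_normr_powR_lty ff.
have fin : (\int[mu]_t (`|f t| `^ p)%:E)%E \is a fin_num.
  by rewrite ge0_fin_numE //; apply: integral_ge0 => t _; rewrite lee_fin powR_ge0.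
by rewrite /Lp_fnorm Lnorm_powR_integral -[in LHS](fineK fin) poweR_EFin.
Qed.

Lemma Lp_fnorm_dominated_cvg0 (h : nat -> T -> R) (g : T -> R) :
  (forall n, measurable_fun setT (h n)) -> measurable_fun setT g ->
  (forall n t, 0 <= h n t <= g t) -> (LN g < +oo)%E ->
  (\forall t \ae mu, h ^~ t @ \oo --> 0) -> Lp_fnorm (h n) @[n --> \oo] --> 0.
Proof.
move=> mh mg hg gfin hcv.
have hfin n : (LN (h n) < +oo)%E := le_lt_trans (Lnorm_le (mh n) mg (hg n)) gfin.
have ig : mu.-integrable setT (fun t => (`|g t| `^ p)%:E).
  apply/integrableP; split; first exact: measurable_normr_powR.
  rewrite (eq_integral (fun t => (`|g t| `^ p)%:E)); first exact: integral_normr_powR_lty.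
  by move=> t _; rewrite abse_EFin ger0_norm ?powR_ge0.
have Fcv : \forall t \ae mu, setT t ->
    (fun n => (`|h n t| `^ p)%:E) @ \oo --> (0%E : \bar R).
  apply: filterS hcv => t ht _; apply: cvg_EFin; first exact: nearW.
  by apply: powR_cvg0_nonneg => //; rewrite -(normr0 R); exact: cvg_norm.
have Fg : \forall t \ae mu, forall n, setT t -> (`|(`|h n t| `^ p)%:E| <= (`|g t| `^ p)%:E)%E.
  apply: aeW => t n _; rewrite abse_EFin ger0_norm ?powR_ge0 // lee_fin.
  have /andP[h0 hle] := hg n t.
  by apply: ge0_ler_powR; rewrite ?nnegrE ?(ltW p0) ?ger0_norm // (le_trans h0).
have [_ _] := dominated_convergence measurableT
  (fun n => measurable_normr_powR (mh n)) (measurable_cst 0%E) Fcv ig Fg.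
rewrite integral0 => /fine_cvgP[_ cvF].
under eq_fun do rewrite Lp_fnormE //.
apply: powR_cvg0_nonneg cvF; first by rewrite invr_gt0.
by move=> n; apply/fine_ge0/integral_ge0 => t _; rewrite lee_fin powR_ge0.
Qed.

End LpFinite.

Section LpBochner.
Context {d : measure_display} {T : measurableType d} {R : realType}.
Variable mu : {measure set T -> \bar R}.
Hypothesis mu_complete : measure_is_complete mu.
Variable X : completeNormedModType R.
Variable p : R.
Hypothesis p1 : 1 <= p.

Lemma Lp_simple_dense (x : T -> X) : bochner_measurable mu X x ->
  Lp_finite mu p (fun t => `|x t|) -> forall e, 0 < e ->
  exists s, simple_fun mu X s /\ Lp_fnorm mu p (fun t => `|x t - s t|) < e.
Proof.
move=> bx fx e e0.
have [s [hs sx cvs]] := bochner_dominated_simple_approx mu_complete bx.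
have [[m3x f3x] _] := Lp_finite_scale p1 (ler0n _ 3) fx.
have hx3 n t : 0 <= `|x t - s n t| <= 3 * `|x t|.
  by rewrite normr_ge0 (le_trans (ler_normB _ _)) //; have := sx n t; lra.
have cv0 : \forall t \ae mu, (fun n => `|x t - s n t|) @ \oo --> 0.
  apply: filterS cvs => t ht.
  have : (fun n => x t - s n t) @ \oo --> x t - x t by apply: cvgB => //; exact: cvg_cst.
  by move/cvg_norm; rewrite subrr normr0.
have := Lp_fnorm_dominated_cvg0 p1
  (fun n => measurable_norm_bochnerD mu_complete bx (simple_funN (hs n))) m3x hx3 f3x cv0.
move=> /cvgr_dist_lt /(_ e e0) /filter_ex[n sn]; exists (s n); split => //.
by move: sn; rewrite sub0r normrN ger0_norm // fine_ge0 // Lnorm_ge0.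
Qed.

Lemma Lp_LASQ : LASQ X -> LASQ_in (Lp_set mu X p%:E) (Lp_norm mu X p%:E).
Proof.
move=> lasq.
have -> : Lp_set mu X p%:E =
    (fun f => bochner_measurable mu X f /\ Lp_finite mu p (fun t => `|f t|)).
  apply/funext => f; apply/propext; split=> [[bf ff]|[bf [_ ff]]]; split=> //.
  by split=> //; apply: (measurable_norm_bochner mu_complete).
apply: (LASQ_in_lattice_bochner mu_complete (fun f (h : Lp_finite mu p f) => h.1)
  (Lp_finite_le p1) (Lp_finite_add p1) (Lp_finite_scale p1) (Lp_finite_indic p1) lasq).
exact: Lp_simple_dense.
Qed.

End LpBochner.

(** * Lebesgue-Bochner space, infinite exponent *)

Section PositiveMeasure.
Context {d : measure_display} {T : measurableType d} {R : realType}.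
Variable mu : {measure set T -> \bar R}.

Lemma measure_gt0_setT (A : set T) : measurable A -> (0 < mu A)%E -> (0 < mu setT)%E.
Proof. by move=> mA A0; apply: lt_le_trans A0 _; apply: le_measure; rewrite ?inE. Qed.

Lemma measure_gt0_ae_exists (A : set T) (P : T -> Prop) : measurable A -> (0 < mu A)%E ->
  (\forall t \ae mu, P t) -> exists t, A t /\ P t.
Proof.
move=> mA A0 [N [mN N0 sub]]; apply: contrapT => nAP.
have : mu.-negligible A.
  by exists N; split => // t At; apply: sub => Pt; apply: nAP; exists t.
by move/(negligibleP _ mA) => Anull; rewrite Anull ltxx in A0.
Qed.

Lemma measure_gt0_cover (E : set T) (B : nat -> set T) : measurable E -> (0 < mu E)%E ->
  (forall n, measurable (B n)) -> (\forall t \ae mu, E t -> exists n, B n t) ->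
  exists n, (0 < mu (E `&` B n))%E.
Proof.
move=> mE E0 mB ae; apply: contrapT => /forallNP EB0.
have EBnull n : mu.-negligible (E `&` B n).
  apply/negligibleP; first exact: measurableI.
  by apply/eqP; rewrite eq_le measure_ge0 andbT leNgt; apply/negP/EB0.
have : mu.-negligible E.
  apply: negligibleS (negligibleU (negligible_bigcup EBnull) ae) => t Et.
  have [[n Bn]|nB] := pselect (exists n, B n t); first by left; exists n.
  by right => /(_ Et).
by move/(negligibleP _ mE) => Enull; rewrite Enull ltxx in E0.
Qed.

Lemma sigma_finite_measure_gt0 : sigma_finite setT mu -> (0 < mu setT)%E ->
  exists D, [/\ measurable D, (0 < mu D)%E & (mu D < +oo)%E].
Proof.
move=> [F Fcov Fp] mu0.
have [m] : exists m, (0 < mu (setT `&` F m))%E.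
  apply: measure_gt0_cover => //; first by move=> m; case: (Fp m).
  by apply: aeW => t _; have : [set: T] t by []; rewrite Fcov => -[m _ Fm]; exists m.
by rewrite setTI => Fm0; exists (F m); case: (Fp m).
Qed.

End PositiveMeasure.

Section Localization.
Context {d : measure_display} {T : measurableType d} {R : realType}.
Variable mu : {measure set T -> \bar R}.
Hypothesis mu_complete : measure_is_complete mu.
Variable X : completeNormedModType R.

Lemma bochner_localize (f : T -> X) (D : set T) (eps : R) : bochner_measurable mu X f ->
  measurable D -> (0 < mu D)%E -> 0 < eps ->
  exists A v, [/\ measurable A, A `<=` D, (0 < mu A)%E & forall t, A t -> `|f t - v| <= eps].
Proof.
move=> bf mD D0 eps0; have [s [hs ae]] := bf.
pose B n := [set t | `|f t - s n t| <= eps].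
have mB n : measurable (B n).
  exact/measurable_sublevel/(measurable_norm_bochnerD mu_complete bf)/simple_funN.
have [n DB0] : exists n, (0 < mu (D `&` B n))%E.
  apply: measure_gt0_cover => //; apply: filterS ae => t ht _.
  by move: ht => /cvgr_dist_le /(_ eps eps0) /filter_ex[n fsn]; exists n.
have [m [A [w [hA [dis sE]]]]] := hs n.
(* [C j] is the [j]-th piece of [s n] for [j < m]; [C m] covers the points where [s n]
   vanishes, on which [|f| <= eps] *)
pose C j := if @insub _ (fun j => (j < m)%N) 'I_m j is Some i then A i
            else [set t | `|f t| <= eps].
pose v j := if @insub _ (fun j => (j < m)%N) 'I_m j is Some i then w i else 0.
have mC j : measurable (C j).
  rewrite /C; case: insubP => [i _ _|_]; first by case: (hA i).
  exact/measurable_sublevel/(measurable_norm_bochner mu_complete).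
have [j DBC0] : exists j, (0 < mu ((D `&` B n) `&` C j))%E.
  apply: measure_gt0_cover => //; first exact: measurableI.
  apply: aeW => t [Dt Bt]; have [[i Ait]|nA] := pselect (exists i, A i t).
    by exists i; rewrite /C valK.
  exists m; rewrite /C insubN ?ltnn //=.
  by move: Bt; rewrite /B /= sE indic_sum_out ?subr0 // => i Ait; apply: nA; exists i.
exists ((D `&` B n) `&` C j), (v j); split => //.
- by apply: measurableI => //; exact: measurableI.
- by move=> t [[]].
move=> t [[Dt Bt] Ct]; move: Ct Bt; rewrite /C /v /B /= sE.
case: insubP => [i _ _ Ait|_ ft _]; last by rewrite subr0.
by rewrite (indic_sum_in _ dis Ait).
Qed.

Lemma bochner_localize_family (x : nat -> T -> X) k (D : set T) (eps : R) :
  (forall i, (i < k)%N -> bochner_measurable mu X (x i)) ->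
  measurable D -> (0 < mu D)%E -> 0 < eps ->
  exists A (v : nat -> X), [/\ measurable A, A `<=` D, (0 < mu A)%E &
    forall i t, (i < k)%N -> A t -> `|x i t - v i| <= eps].
Proof.
elim: k D => [|k IH] D bx mD D0 eps0; first by exists D, (fun=> 0); split.
have [A0 [v0 [mA0 A0D A00 H0]]] := IH D (fun i ik => bx i (ltnW ik)) mD D0 eps0.
have [A1 [w [mA1 A1A0 A10 H1]]] := bochner_localize (bx k (ltnSn k)) mA0 A00 eps0.
exists A1, (fun i => if i == k then w else v0 i); split => //.
  by move=> t /A1A0 /A0D.
move=> i t; rewrite ltnS leq_eqVlt => /orP[/eqP ->|ik] A1t; first by rewrite eqxx; exact: H1.
by rewrite (ltn_eqF ik); apply: H0 => //; exact: A1A0.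
Qed.

End Localization.

Section Linfty.
Context {d : measure_display} {T : measurableType d} {R : realType}.
Variable mu : {measure set T -> \bar R}.
Variable X : completeNormedModType R.

Local Notation Linf g := (Lnorm mu +oo%E (fun t => (`|g t|)%:E)).

Lemma Linf_ess_sup (g : T -> X) : (0 < mu setT)%E ->
  Linf g = ess_sup mu (fun t => (`|g t|)%:E).
Proof.
move=> mu0; rewrite unlock /Lnorm mu0; congr ess_sup; apply/funext => t /=.
by rewrite normr_id.
Qed.

Lemma Linf_le (g : T -> X) c : (0 < mu setT)%E ->
  (\forall t \ae mu, `|g t| <= c) -> (Linf g <= c%:E)%E.
Proof.
move=> mu0 gc; rewrite Linf_ess_sup //; apply/ess_supP.
by apply: filterS gc => t; rewrite lee_fin.
Qed.

Lemma Linf_ge (g : T -> X) (A : set T) c : measurable A -> (0 < mu A)%E ->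
  (forall t, A t -> c <= `|g t|) -> (c%:E <= Linf g)%E.
Proof.
move=> mA A0 cg.
have mu0 := measure_gt0_setT mA A0.
rewrite Linf_ess_sup //.
have [t [At gt]] := measure_gt0_ae_exists mA A0 (ess_sup_ge mu (fun t => (`|g t|)%:E)).
by apply: le_trans gt; rewrite lee_fin cg.
Qed.

Lemma Linf_eq1 (g : T -> X) : fine (Linf g) = 1 -> (0 < mu setT)%E /\ Linf g = 1%:E.
Proof.
rewrite unlock /Lnorm; case: ifPn => mu0 /=; last by move=> /esym/eqP; rewrite oner_eq0.
by case: (ess_sup _ _) => [r /= -> //| |] /= /esym/eqP; rewrite oner_eq0.
Qed.

Lemma Linf_eq1_ae_le1 (g : T -> X) : (0 < mu setT)%E -> Linf g = 1%:E ->
  \forall t \ae mu, `|g t| <= 1.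
Proof.
move=> mu0 g1; apply: filterS (ess_sup_ge mu (fun t => (`|g t|)%:E)) => t.
by rewrite -Linf_ess_sup // g1 lee_fin.
Qed.

Lemma Linf_eq1_unit (g : T -> X) : (0 < mu setT)%E -> Linf g = 1%:E -> exists u : X, `|u| = 1.
Proof.
move=> mu0 g1; have [[t gt0]|g0] := pselect (exists t, g t != 0).
  by exists (`|g t|^-1 *: g t); rewrite normrZ ger0_norm ?invr_ge0 // mulVf ?normr_eq0.
have : (Linf g <= 0%:E)%E.
  apply: Linf_le => //; apply: aeW => t; rewrite normr_le0.
  by apply: contrapT => /negP gt0; apply: g0; exists t.
by rewrite g1 lee_fin ler10.
Qed.

Lemma Linf_indicZ (A : set T) (z : X) : measurable A -> (0 < mu A)%E ->
  Linf (fun t => (\1_A t : R) *: z) = (`|z|)%:E.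
Proof.
move=> mA A0; apply/eqP; rewrite eq_le; apply/andP; split.
  have mu0 := measure_gt0_setT mA A0.
  apply: Linf_le => //; apply: aeW => t; rewrite normrZ indicE.
  by case: (_ \in _); rewrite ?normr1 ?normr0 ?mul1r ?mul0r.
by apply: (Linf_ge mA A0) => t At; rewrite normrZ indicE mem_set // normr1 mul1r.
Qed.

Lemma Lp_set_indicZ (A : set T) (z : X) : measurable A -> (0 < mu A)%E -> (mu A < +oo)%E ->
  Lp_set mu X +oo%E (fun t => (\1_A t : R) *: z).
Proof.
move=> mA A0 Afin; split; first exact/simple_fun_bochner/simple_fun_indicZ.
by rewrite Linf_indicZ // ltry.
Qed.

Lemma Linf_localized_norm_le (g : T -> X) (A : set T) (v : X) (e : R) :
  Linf g = 1%:E -> measurable A -> (0 < mu A)%E ->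
  (forall t, A t -> `|g t - v| <= e) -> `|v| <= 1 + e.
Proof.
move=> g1 mA A0 gv.
have mu0 := measure_gt0_setT mA A0.
have [t [At gt1]] := measure_gt0_ae_exists mA A0 (Linf_eq1_ae_le1 mu0 g1).
by have := ler_norm_move v (g t); rewrite distrC; have := gv t At; lra.
Qed.

Lemma Linf_add_indicZ (g : T -> X) (A : set T) (v z : X) (e : R) :
  Linf g = 1%:E -> measurable A -> (0 < mu A)%E -> 0 <= e ->
  (forall t, A t -> `|g t - v| <= e) -> 1 - 4 * e <= `|v + z| <= 1 + 2 * e ->
  `|fine (Linf (fun t => g t + (\1_A t : R) *: z)) - 1| <= 5 * e.
Proof.
move=> g1 mA A0 e0 gv /andP[vz1 vz2].
have mu0 := measure_gt0_setT mA A0.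
have up : (Linf (fun t => g t + (\1_A t : R) *: z) <= (1 + 3 * e)%:E)%E.
  apply: Linf_le => //; apply: filterS (Linf_eq1_ae_le1 mu0 g1) => t gt1; rewrite indicE.
  case: (boolP (t \in A)) => [/set_mem At|_]; last by rewrite scale0r addr0; lra.
  by rewrite scale1r (le_trans (ler_normD_move _ v _)) //; have := gv t At; lra.
have lo : ((1 - 5 * e)%:E <= Linf (fun t => g t + (\1_A t : R) *: z))%E.
  apply: Linf_ge mA A0 _ => t At; rewrite indicE mem_set // scale1r.
  by have := ler_normD_move v (g t) z; rewrite distrC; have := gv t At; lra.
have := Lnorm_ge0 mu +oo%E (fun t => (`|g t + (\1_A t : R) *: z|)%:E).
move: up lo; case: (Lnorm _ _ _) => [r| |] //=; rewrite ?lee_fin => h1 h2 h3.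
by rewrite ler_distlC; apply/andP; split; lra.
Qed.

End Linfty.

Section LinftyAlmostSquare.
Context {d : measure_display} {T : measurableType d} {R : realType}.
Variable mu : {measure set T -> \bar R}.
Hypothesis mu_complete : measure_is_complete mu.
Hypothesis mu_sigma_finite : sigma_finite setT mu.
Variable X : completeNormedModType R.

Lemma Linf_localize_units n (x : 'I_n.+1 -> T -> X) e :
  (forall i, Lp_set mu X +oo%E (x i) /\ Lp_norm mu X +oo%E (x i) = 1) -> 0 < e ->
  exists (A : set T) (w : 'I_n.+1 -> X),
    [/\ measurable A, (0 < mu A)%E, (mu A < +oo)%E, forall i, `|w i| = 1 &
      forall z, (forall i, lasq_witness e (w i) z) -> forall i,
        `|Lp_norm mu X +oo%E (x i + (fun t => (\1_A t : R) *: z)) - 1| <= 5 * e].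
Proof.
move=> hx e0.
have [mu0 _] := Linf_eq1 (hx ord0).2.
have x1 i := (Linf_eq1 (hx i).2).2.
have [u u1] := Linf_eq1_unit mu0 (x1 ord0).
have [D [mD D0 Dfin]] := sigma_finite_measure_gt0 mu_sigma_finite mu0.
have [A [v [mA AD A0 xv]]] := bochner_localize_family mu_complete
  (x := fun j => x (inord j)) (k := n.+1) (fun j _ => (hx (inord j)).1.1) mD D0 e0.
have xAv (i : 'I_n.+1) t : A t -> `|x i t - v i| <= e.
  by move=> At; have := xv i t (ltn_ord i) At; rewrite inord_val.
have [w hw] := choice (fun i : 'I_n.+1 => exists_unit_dir (v i) u1).
exists A, w; split => //; first by apply: le_lt_trans Dfin; apply: le_measure; rewrite ?inE.
  by move=> i; case: (hw i).
move=> z wz i; have [w1 vw] := hw i.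
have vi : 0 <= `|v i| <= 1 + e.
  by rewrite normr_ge0 (Linf_localized_norm_le (x1 i) mA A0 (xAv i)).
apply: Linf_add_indicZ (x1 i) mA A0 (ltW e0) (xAv i) _.
have := lasq_witness_scaleD w1 (wz i) (ltW e0) vi.
by rewrite -vw => /andP[? ?]; apply/andP; split; lra.
Qed.

Lemma Linf_ASQ : ASQ X -> ASQ_in (Lp_set mu X +oo%E) (Lp_norm mu X +oo%E).
Proof.
move=> asq; apply: ASQ_in_approx => n x hx e /andP[e0 _].
have e5 : 0 < e / 5 by rewrite divr_gt0.
have [A [w [mA A0 Afin w1 xAz]]] := Linf_localize_units hx e5.
have [z wz] := ASQ_witness asq w1 e5.
exists (fun t => (\1_A t : R) *: z); split; first exact: Lp_set_indicZ.
- by rewrite /Lp_norm Linf_indicZ //=; case: (wz ord0).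
- by rewrite /Lp_norm Linf_indicZ //=; case: (wz ord0) => _ ? _ _; lra.
- by move=> i; apply: le_trans (xAz z wz i) _; lra.
Qed.

Lemma Linf_LASQ : LASQ X -> LASQ_in (Lp_set mu X +oo%E) (Lp_norm mu X +oo%E).
Proof.
move=> lasq; apply: LASQ_in_approx => x Sx Nx e /andP[e0 _].
have e5 : 0 < e / 5 by rewrite divr_gt0.
have [A [w [mA A0 Afin w1 xAz]]] :=
  Linf_localize_units (n := 0) (x := fun=> x) (fun=> conj Sx Nx) e5.
have [z wz] := LASQ_witness lasq (w1 ord0) e5.
have wz' z' : lasq_witness (e / 5) (w ord0) z' ->
    forall i : 'I_1, lasq_witness (e / 5) (w i) z'.
  by move=> h i; rewrite ord1.
exists (fun t => (\1_A t : R) *: z); split; first exact: Lp_set_indicZ.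
- by rewrite /Lp_norm Linf_indicZ //=; case: wz.
- by rewrite /Lp_norm Linf_indicZ //=; case: wz => _ ? _ _; lra.
- by apply: le_trans (xAz z (wz' _ wz) ord0) _; lra.
have -> : x - (fun t => (\1_A t : R) *: z) = x + (fun t => (\1_A t : R) *: - z).
  by apply/funext => t; rewrite !fctE scalerN.
by apply: le_trans (xAz _ (wz' _ (lasq_witnessNr wz)) ord0) _; lra.
Qed.

End LinftyAlmostSquare.

Unset Implicit Arguments.

Theorem theorem4p5 (R : realType) (d : measure_display) (T : measurableType d)
  (mu : {measure set T -> \bar R})
  (mu_complete : measure_is_complete mu) (mu_sfin : sigma_finite setT mu)
  (X : completeNormedModType R) :
  [/\ (* E(X) is LASQ *)
      (forall (inE : set (T -> R)) (nE : (T -> R) -> R),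
         kothe_space mu inE nE -> LASQ X -> simple_dense_in_EX mu X inE nE ->
         LASQ_in (EX mu X inE) (EX_norm X nE)),
      (* L^p(mu, X), 1 <= p < oo *)
      (forall p : R, 1 <= p -> LASQ X ->
         LASQ_in (Lp_set mu X p%:E) (Lp_norm mu X p%:E))
    & (* L^oo(mu, X) *)
      (ASQ X -> ASQ_in (Lp_set mu X +oo%E) (Lp_norm mu X +oo%E)) /\
      (LASQ X -> LASQ_in (Lp_set mu X +oo%E) (Lp_norm mu X +oo%E))].
Proof.
split.
- by move=> inE nE; exact: kothe_EX_LASQ.
- by move=> p p1; apply: (Lp_LASQ mu_complete p1).
- by split; [apply: (Linf_ASQ mu_complete mu_sfin) | apply: (Linf_LASQ mu_complete mu_sfin)].
Qed.
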